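(* Let $B$, $B_u$ be solutions on $[0,T]$ of the constrained and unconstrained ODEs of the context, and let $\pi^\ast,\hat\pi^\ast,\pi_u,\pi_M$ be as in the context. (i) If $0<\pi_M=\frac\alpha2<\alpha$ and $\alpha<\pi_u(t^\ast)<\beta$ for some $t^\ast\in[0,T]$, then $B(\tau)=0$ for all $\tau\in[0,T]$, $\pi^\ast(t)=\alpha$ for all $t\in[0,T]$, and the functions $\pi^\ast$ and $t\mapsto\mathrm{Cap}(\pi_u(t),\alpha,\beta)$ on $[0,T]$ are not identical. (ii) If $\pi_M>\beta>0$, then $\mathrm{sign}(\frac{\partial}{\partial t}\hat\pi^\ast(t))=\mathrm{sign}(\frac{\partial}{\partial t}\pi_u(t))=-\mathrm{sign}(\rho b)$ for all $t\in[0,T]$. Hence, if in addition $b<0$ and $\rho<0$, then $\pi^\ast(t)=\mathrm{Cap}(\pi_u(t),\alpha,\beta)$ for all $t\in[0,T]$.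
   Context: Parameters: $T>0$; $\eta,\kappa,\sigma>0$; $\rho\in(-1,1)$; $b<1$, $b\ne0$; $K=[\alpha,\beta]$, $-\infty\le\alpha<\beta\le\infty$; $\delta_K(x)=-\alpha x\mathbf 1_{\{x>0\}}-\beta x\mathbf 1_{\{x<0\}}$. $B_-=\frac{(1-b)\alpha-\eta}\sigma$, $B_+=\frac{(1-b)\beta-\eta}\sigma$; $r_0=-\frac b{2(1-b)}\eta^2$, $r_1=\frac b{1-b}\eta\sigma\rho-\kappa$, $r_2=\sigma^2(1+\frac b{1-b}\rho^2)$. Constrained ODE: $B'(\tau)=-\kappa B+\frac12\sigma^2B^2+\frac12\frac b{1-b}\inf_{\lambda\in\mathbb R}(2(1-b)\delta_K(\lambda)+(\eta+\lambda+\sigma\rho B)^2)$, $B(0)=0$. Unconstrained ODE: $B_u'(\tau)=-r_0+r_1B_u+\frac12r_2B_u^2$, $B_u(0)=0$. $\lambda^\ast(B)=[(1-b)\alpha-(\eta+\sigma\rho B)]\mathbf 1_{\{\rho B<B_-\}}+[(1-b)\beta-(\eta+\sigma\rho B)]\mathbf 1_{\{\rho B>B_+\}}$; $\pi^\ast(t)=\frac1{1-b}(\eta+\lambda^\ast(B(T-t))+\sigma\rho B(T-t))$; $\hat\pi^\ast(t)=\frac1{1-b}(\eta+\sigma\rho B(T-t))$; $\pi_u(t)=\frac1{1-b}(\eta+\sigma\rho B_u(T-t))$; $\pi_M=\frac\eta{1-b}$; $\mathrm{Cap}(x,\alpha,\beta)=\alpha$ if $x<\alpha$, $x$ if $\alpha\le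 x\le\beta$, $\beta$ if $x>\beta$; $\mathrm{sign}(x)\in\{-1,0,1\}$. *)

From Stdlib Require Import Reals.
From Coquelicot Require Import Coquelicot.
Open Scope R_scope.

(* K = [alpha, beta] with alpha, beta in the extended reals (Rbar).
   delta_K x = -alpha x 1_{x>0} - beta x 1_{x<0}, with the convention
   that a term whose indicator vanishes is 0; may be +infinity. *)
Definition deltaK (alpha beta : Rbar) (x : R) : Rbar :=
  if Rlt_dec 0 x then Rbar_opp (Rbar_mult alpha (Finite x))
  else if Rlt_dec x 0 then Rbar_opp (Rbar_mult beta (Finite x))
  else Finite 0.

Definition inf_term (eta sigma rho b : R) (alpha beta : Rbar) (B : R) : Rbar :=
  Rbar_glb (fun y : Rbar => exists l : R,
    y = Rbar_plus (Rbar_mult (Finite (2 * (1 - b))) (deltaK alpha beta l))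
                  (Finite ((eta + l + sigma * rho * B) ^ 2))).

(* right-hand side of the constrained ODE B' = F(B).  The infimum is finite
   (it is at most its value at lambda = 0), so [real] loses nothing. *)
Definition F_con (eta kappa sigma rho b : R) (alpha beta : Rbar) (B : R) : R :=
  - kappa * B + / 2 * sigma ^ 2 * B ^ 2
  + / 2 * (b / (1 - b)) * real (inf_term eta sigma rho b alpha beta B).

Definition r0 (eta b : R) : R := - (b / (2 * (1 - b))) * eta ^ 2.
Definition r1 (eta kappa sigma rho b : R) : R := b / (1 - b) * eta * sigma * rho - kappa.
Definition r2 (sigma rho b : R) : R := sigma ^ 2 * (1 + b / (1 - b) * rho ^ 2).

Definition F_unc (eta kappa sigma rho b : R) (Bu : R) : R :=
  - r0 eta b + r1 eta kappa sigma rho b * Bu + / 2 * r2 sigma rho b * Bu ^ 2.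

Definition Bminus (eta sigma b : R) (alpha : Rbar) : Rbar :=
  Rbar_mult (Finite (/ sigma)) (Rbar_minus (Rbar_mult (Finite (1 - b)) alpha) (Finite eta)).
Definition Bplus (eta sigma b : R) (beta : Rbar) : Rbar :=
  Rbar_mult (Finite (/ sigma)) (Rbar_minus (Rbar_mult (Finite (1 - b)) beta) (Finite eta)).

(* lambda^*(B); in the first (resp. second) branch alpha (resp. beta) is
   necessarily finite, so [real alpha] (resp. [real beta]) is its value. *)
Definition lambda_star (eta sigma rho b : R) (alpha beta : Rbar) (B : R) : R :=
  if Rbar_lt_dec (Finite (rho * B)) (Bminus eta sigma b alpha)
  then (1 - b) * real alpha - (eta + sigma * rho * B)
  else if Rbar_lt_dec (Bplus eta sigma b beta) (Finite (rho * B))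
  then (1 - b) * real beta - (eta + sigma * rho * B)
  else 0.

Definition pi_star (T eta sigma rho b : R) (alpha beta : Rbar) (B : R -> R) (t : R) : R :=
  / (1 - b) * (eta + lambda_star eta sigma rho b alpha beta (B (T - t))
               + sigma * rho * B (T - t)).

Definition pi_hat (T eta sigma rho b : R) (B : R -> R) (t : R) : R :=
  / (1 - b) * (eta + sigma * rho * B (T - t)).

Definition pi_u (T eta sigma rho b : R) (Bu : R -> R) (t : R) : R :=
  / (1 - b) * (eta + sigma * rho * Bu (T - t)).

Definition pi_M (eta b : R) : R := eta / (1 - b).

Definition Cap (x : R) (alpha beta : Rbar) : Rbar :=
  if Rbar_lt_dec (Finite x) alpha then alpha
  else if Rbar_lt_dec beta (Finite x) then beta
  else Finite x.

From Stdlib Require Import Reals Lra.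
From Coquelicot Require Import Coquelicot.
Open Scope R_scope.

(* The infimum in the constrained ODE is attained at lambda = clip c - c, where
   c = eta + sigma rho B and clip projects c onto (1 - b) K; its value 2 c clip(c) - clip(c)^2
   is a locally Lipschitz function of B, and the same projection shows pi_star = Cap(pi_hat).
   Both ODEs are thus autonomous with a locally Lipschitz right-hand side F, so (Gronwall) a
   solution meeting a zero of F is constant, and by the intermediate value theorem F(B(tau))
   keeps the sign of F(B(0)).
   In (i), alpha = 2 pi_M makes 0 an equilibrium of the constrained ODE, hence B = 0 and
   pi_star = Cap(pi_M) = alpha, whereas Cap(pi_u(tstar)) = pi_u(tstar) <> alpha.  In (ii), both
   right-hand sides have the sign of b at 0, hence along the solutions, and the derivatives of
   pi_hat and pi_u are -sigma rho / (1 - b) times them.  If moreover b, rho < 0, then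
   B, B_u <= 0, so pi_hat, pi_u >= pi_M > beta, and pi_star and Cap(pi_u) both equal beta. *)

Lemma Rbar_mult_pos_p_infty (x : R) : 0 < x -> Rbar_mult x p_infty = p_infty.
Proof.
  intros Hx; rewrite Rbar_mult_comm.
  apply is_Rbar_mult_unique, is_Rbar_mult_p_infty_pos; simpl; lra.
Qed.

Lemma Rbar_mult_pos_m_infty (x : R) : 0 < x -> Rbar_mult x m_infty = m_infty.
Proof.
  intros Hx; rewrite Rbar_mult_comm.
  apply is_Rbar_mult_unique, is_Rbar_mult_m_infty_pos; simpl; lra.
Qed.

Lemma Rbar_mult_p_infty_neg (x : R) : x < 0 -> Rbar_mult p_infty x = m_infty.
Proof. intros Hx; apply is_Rbar_mult_unique, is_Rbar_mult_p_infty_neg; simpl; lra. Qed.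

Lemma Rbar_mult_pos_r_finite (x : Rbar) (y z : R) :
  0 < y -> Rbar_mult x y = Finite z -> x = Finite (z / y).
Proof.
  intros Hy Hxy; destruct x as [x | |].
  - simpl in Hxy; injection Hxy as <-; f_equal; field; lra.
  - rewrite Rbar_mult_comm, Rbar_mult_pos_p_infty in Hxy by lra; discriminate.
  - rewrite Rbar_mult_comm, Rbar_mult_pos_m_infty in Hxy by lra; discriminate.
Qed.

Lemma sign_eq_of_mult_pos (x y : R) : 0 < x * y -> sign x = sign y.
Proof.
  intros Hxy; destruct (Rtotal_order x 0) as [Hx | [-> | Hx]].
  - rewrite (sign_eq_m1 x), (sign_eq_m1 y); [reflexivity | nra | exact Hx].
  - rewrite Rmult_0_l in Hxy; lra.
  - rewrite (sign_eq_1 x), (sign_eq_1 y); [reflexivity | nra | exact Hx].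
Qed.

Lemma is_derive_continuity_pt (f : R -> R) (x l : R) :
  is_derive f x l -> continuity_pt f x.
Proof.
  intros Hf; apply continuity_pt_filterlim, (ex_derive_continuous f); now exists l.
Qed.

Lemma derive_nonpos_nonincreasing (f f' : R -> R) (a b : R) : a <= b ->
  (forall t, a <= t <= b -> is_derive f t (f' t)) ->
  (forall t, a <= t <= b -> f' t <= 0) -> f b <= f a.
Proof.
  intros Hab Hf Hf'.
  destruct (MVT_gen f a b f') as [c [Hc Hmvt]];
    rewrite ?Rmin_left, ?Rmax_right in * by lra.
  - intros t Ht; apply Hf; lra.
  - intros t Ht; apply (is_derive_continuity_pt f t (f' t)), Hf, Ht.
  - specialize (Hf' c Hc); nra.
Qed.

Lemma derive_nonneg_nondecreasing (f f' : R -> R) (a b : R) : a <= b ->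
  (forall t, a <= t <= b -> is_derive f t (f' t)) ->
  (forall t, a <= t <= b -> 0 <= f' t) -> f a <= f b.
Proof.
  intros Hab Hf Hf'.
  enough (- f b <= - f a) by lra.
  apply (derive_nonpos_nonincreasing (fun t => - f t) (fun t => - f' t) a b Hab).
  - intros t Ht; apply (is_derive_opp f), Hf, Ht.
  - intros t Ht; specialize (Hf' t Ht); lra.
Qed.

Lemma IVT_interval_mult (f : R -> R) (a b : R) : a <= b ->
  (forall t, a <= t <= b -> continuity_pt f t) -> f a * f b <= 0 ->
  exists z, a <= z <= b /\ f z = 0.
Proof.
  intros Hab Hf Hfab.
  destruct (Req_dec (f a) 0) as [Ha | Ha]; [exists a; split; [lra | exact Ha] |].
  destruct (Req_dec (f b) 0) as [Hb | Hb]; [exists b; split; [lra | exact Hb] |].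
  assert (Hlt : a < b) by (destruct (Rle_lt_or_eq_dec a b Hab); [assumption | subst; nra]).
  destruct (Rlt_le_dec (f a) 0) as [Hneg | Hpos].
  - destruct (Ranalysis5.IVT_interv f a b) as [z Hz]; auto; [nra |].
    now exists z.
  - destruct (Ranalysis5.IVT_interv (fun t => - f t) a b) as [z [Hz Hfz]]; auto.
    + intros t Ht; apply continuity_pt_opp, Hf, Ht.
    + lra.
    + nra.
    + exists z; split; [exact Hz | lra].
Qed.

Definition locally_lipschitz (f : R -> R) : Prop :=
  forall M, exists L, 0 <= L /\ forall x y, Rabs x <= M -> Rabs y <= M ->
    Rabs (f y - f x) <= L * Rabs (y - x).

Lemma locally_lipschitz_bounded (f : R -> R) : locally_lipschitz f ->
  forall M, exists K, 0 <= K /\ forall x, Rabs x <= M -> Rabs (f x) <= K.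
Proof.
  intros Hf M; destruct (Hf (Rabs M)) as [L [HL HfL]].
  exists (Rabs (f 0) + L * Rabs M); split.
  - pose proof (Rabs_pos (f 0)); pose proof (Rabs_pos M); nra.
  - intros x Hx.
    assert (HxM : Rabs x <= Rabs M) by (pose proof (Rle_abs M); lra).
    specialize (HfL 0 x); rewrite Rabs_R0, Rminus_0_r in HfL.
    pose proof (Rabs_triang_inv (f x) (f 0)); pose proof (Rabs_pos M).
    specialize (HfL (Rabs_pos M) HxM); nra.
Qed.

Lemma locally_lipschitz_continuity_pt (f : R -> R) (x : R) :
  locally_lipschitz f -> continuity_pt f x.
Proof.
  intros Hf eps Heps.
  destruct (Hf (Rabs x + 1)) as [L [HL HfL]].
  exists (Rmin 1 (eps / (L + 1))); split.
  - apply Rmin_pos; [lra | apply Rdiv_lt_0_compat; lra].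
  - intros y [_ Hy]; simpl in *; unfold Rdist in *.
    assert (Hy1 : Rabs (y - x) < 1) by (eapply Rlt_le_trans; [exact Hy | apply Rmin_l]).
    assert (Hyeps : Rabs (y - x) * (L + 1) < eps).
    { apply Rlt_div_r; [lra |]. eapply Rlt_le_trans; [exact Hy | apply Rmin_r]. }
    pose proof (Rabs_triang_inv y x); pose proof (Rabs_pos (y - x)).
    specialize (HfL x y ltac:(lra) ltac:(lra)); nra.
Qed.

Lemma locally_lipschitz_ext (f g : R -> R) :
  (forall x, f x = g x) -> locally_lipschitz f -> locally_lipschitz g.
Proof.
  intros Hfg Hf M; destruct (Hf M) as [L [HL HfL]].
  exists L; split; [exact HL |]; intros x y; rewrite <- !Hfg; apply HfL.
Qed.

Lemma locally_lipschitz_const (c : R) : locally_lipschitz (fun _ => c).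
Proof.
  intros M; exists 0; split; [lra |]; intros x y _ _.
  rewrite Rminus_eq_0, Rabs_R0; lra.
Qed.

Lemma locally_lipschitz_id : locally_lipschitz (fun x => x).
Proof. intros M; exists 1; split; [lra |]; intros x y _ _; lra. Qed.

Lemma locally_lipschitz_plus (f g : R -> R) :
  locally_lipschitz f -> locally_lipschitz g -> locally_lipschitz (fun x => f x + g x).
Proof.
  intros Hf Hg M; destruct (Hf M) as [Lf [HLf Hf']], (Hg M) as [Lg [HLg Hg']].
  exists (Lf + Lg); split; [lra |]; intros x y Hx Hy.
  specialize (Hf' x y Hx Hy); specialize (Hg' x y Hx Hy).
  replace (f y + g y - (f x + g x)) with ((f y - f x) + (g y - g x)) by ring.
  pose proof (Rabs_triang (f y - f x) (g y - g x)); lra.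
Qed.

Lemma locally_lipschitz_mult (f g : R -> R) :
  locally_lipschitz f -> locally_lipschitz g -> locally_lipschitz (fun x => f x * g x).
Proof.
  intros Hf Hg M.
  destruct (Hf M) as [Lf [HLf Hf']], (Hg M) as [Lg [HLg Hg']].
  destruct (locally_lipschitz_bounded f Hf M) as [Kf [HKf Hfb]].
  destruct (locally_lipschitz_bounded g Hg M) as [Kg [HKg Hgb]].
  exists (Kf * Lg + Kg * Lf); split; [nra |]; intros x y Hx Hy.
  specialize (Hf' x y Hx Hy); specialize (Hg' x y Hx Hy).
  specialize (Hfb y Hy); specialize (Hgb x Hx).
  replace (f y * g y - f x * g x) with (f y * (g y - g x) + g x * (f y - f x)) by ring.
  eapply Rle_trans; [apply Rabs_triang |]; rewrite !Rabs_mult.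
  pose proof (Rabs_pos (y - x)); pose proof (Rabs_pos (g y - g x));
    pose proof (Rabs_pos (f y - f x)); pose proof (Rabs_pos (f y)); pose proof (Rabs_pos (g x)).
  nra.
Qed.

Lemma locally_lipschitz_pow (n : nat) : locally_lipschitz (fun x => x ^ n).
Proof.
  induction n as [| n IHn]; simpl.
  - apply locally_lipschitz_const.
  - apply locally_lipschitz_mult; [apply locally_lipschitz_id | exact IHn].
Qed.

Lemma locally_lipschitz_comp (f g : R -> R) :
  locally_lipschitz f -> locally_lipschitz g -> locally_lipschitz (fun x => f (g x)).
Proof.
  intros Hf Hg M.
  destruct (locally_lipschitz_bounded g Hg M) as [K [_ Hgb]].
  destruct (Hf K) as [Lf [HLf Hf']], (Hg M) as [Lg [HLg Hg']].
  exists (Lf * Lg); split; [nra |]; intros x y Hx Hy.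
  eapply Rle_trans; [apply Hf'; apply Hgb; assumption |].
  rewrite Rmult_assoc; apply Rmult_le_compat_l; [exact HLf | apply Hg'; assumption].
Qed.

Ltac locally_lipschitz_poly :=
  repeat first [ apply locally_lipschitz_const | apply locally_lipschitz_id
               | apply locally_lipschitz_pow | apply locally_lipschitz_plus
               | apply locally_lipschitz_mult ].

Section Autonomous_ODE.

Variables (F B : R -> R) (T : R).
Hypothesis HF : locally_lipschitz F.
Hypothesis HB : forall tau, 0 <= tau <= T -> is_derive B tau (F (B tau)).

Lemma solution_continuity_pt (tau : R) : 0 <= tau <= T -> continuity_pt B tau.
Proof. intros Htau; exact (is_derive_continuity_pt B tau _ (HB tau Htau)). Qed.

Lemma solution_bounded : 0 <= T ->
  exists M, forall tau, 0 <= tau <= T -> Rabs (B tau) <= M.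
Proof.
  intros HT.
  destruct (continuity_ab_maj (fun t => Rabs (B t)) 0 T HT) as [m [Hm _]].
  - intros t Ht; apply (continuity_pt_comp B Rabs);
      [exact (solution_continuity_pt t Ht) | apply Rcontinuity_abs].
  - exists (Rabs (B m)); exact Hm.
Qed.

Lemma is_derive_weighted_square (x0 k t : R) : 0 <= t <= T ->
  is_derive (fun s => (B s - x0) ^ 2 * exp (k * s)) t
    ((2 * (B t - x0) * F (B t) + k * (B t - x0) ^ 2) * exp (k * t)).
Proof.
  intros Ht; pose proof (HB t Ht) as HBt.
  assert (Hex : ex_derive B t) by (now exists (F (B t))).
  auto_derive; [exact Hex |].
  replace (Derive (fun x => B x) t) with (F (B t)) by (symmetry; now apply is_derive_unique).
  ring.
Qed.

(* Gronwall: with F x0 = 0, the drift of (B - x0)^2 is at most 2 L (B - x0)^2 in absolute value,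
   so (B - x0)^2 exp(-2 L t) cannot grow forward and (B - x0)^2 exp(2 L t) cannot decrease. *)
Lemma solution_stationary (s : R) : 0 <= T -> 0 <= s <= T -> F (B s) = 0 ->
  forall tau, 0 <= tau <= T -> B tau = B s.
Proof.
  intros HT Hs HFs; set (x0 := B s) in *.
  destruct (solution_bounded HT) as [M HM].
  destruct (HF (Rmax M (Rabs x0))) as [L [HL HFL]].
  assert (Hdrift : forall t, 0 <= t <= T ->
    - (L * (B t - x0) ^ 2) <= (B t - x0) * F (B t) <= L * (B t - x0) ^ 2).
  { intros t Ht; apply Rabs_le_between.
    assert (HFt : Rabs (F (B t)) <= L * Rabs (B t - x0)).
    { rewrite <- (Rminus_0_r (F (B t))), <- HFs.
      apply HFL; [apply Rmax_r | eapply Rle_trans; [apply HM, Ht | apply Rmax_l]]. }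
    rewrite Rabs_mult, <- pow2_abs; pose proof (Rabs_pos (B t - x0)); nra. }
  intros tau Htau.
  assert (Hgap : exists k, (B tau - x0) ^ 2 * exp (k * tau) <= 0).
  { destruct (Rle_lt_dec s tau) as [Hst | Hts].
    - exists (-2 * L).
      replace 0 with ((B s - x0) ^ 2 * exp (-2 * L * s)) by (unfold x0; ring).
      apply (derive_nonpos_nonincreasing (fun t => (B t - x0) ^ 2 * exp (-2 * L * t))
        (fun t => (2 * (B t - x0) * F (B t) + -2 * L * (B t - x0) ^ 2) * exp (-2 * L * t)));
        [lra | intros t Ht; apply is_derive_weighted_square; lra |].
      intros t Ht; specialize (Hdrift t ltac:(lra)); pose proof (exp_pos (-2 * L * t)); nra.
    - exists (2 * L).
      replace 0 with ((B s - x0) ^ 2 * exp (2 * L * s)) by (unfold x0; ring).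
      apply (derive_nonneg_nondecreasing (fun t => (B t - x0) ^ 2 * exp (2 * L * t))
        (fun t => (2 * (B t - x0) * F (B t) + 2 * L * (B t - x0) ^ 2) * exp (2 * L * t)));
        [lra | intros t Ht; apply is_derive_weighted_square; lra |].
      intros t Ht; specialize (Hdrift t ltac:(lra)); pose proof (exp_pos (2 * L * t)); nra. }
  destruct Hgap as [k Hk]; pose proof (exp_pos (k * tau)).
  assert ((B tau - x0) ^ 2 <= 0) by nra.
  nra.
Qed.

Lemma solution_rhs_sign (k tau : R) : 0 <= T -> 0 < F (B 0) * k -> 0 <= tau <= T ->
  0 < F (B tau) * k.
Proof.
  intros HT HF0 Htau.
  assert (Hnz : forall t, 0 <= t <= T -> F (B t) <> 0).
  { intros t Ht Hzero.
    rewrite (solution_stationary t HT Ht Hzero 0), Hzero in HF0 by lra; lra. }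
  enough (Hsame : 0 < F (B tau) * F (B 0))
    by (pose proof (Rmult_lt_0_compat _ _ Hsame HF0); nra).
  apply Rnot_le_lt; intros Hsign.
  destruct (IVT_interval_mult (fun t => F (B t)) 0 tau) as [z [Hz Hzero]].
  - lra.
  - intros t Ht; apply (continuity_pt_comp B F);
      [apply solution_continuity_pt; lra | apply locally_lipschitz_continuity_pt, HF].
  - rewrite Rmult_comm; exact Hsign.
  - exact (Hnz z ltac:(lra) Hzero).
Qed.

Lemma solution_le_start : 0 <= T -> F (B 0) < 0 ->
  forall tau, 0 <= tau <= T -> B tau <= B 0.
Proof.
  intros HT HF0 tau Htau.
  apply (derive_nonpos_nonincreasing B (fun t => F (B t))); [lra | intros t Ht; apply HB; lra |].
  intros t Ht; pose proof (solution_rhs_sign (-1) t HT ltac:(lra) ltac:(lra)); lra.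
Qed.

End Autonomous_ODE.

Section Cap.

Variables (alpha beta : Rbar).
Hypothesis Hab : Rbar_lt alpha beta.

Lemma Cap_below (x : R) : Rbar_lt x alpha -> Cap x alpha beta = alpha.
Proof. intros Hx; unfold Cap; destruct (Rbar_lt_dec x alpha); [reflexivity | contradiction]. Qed.

Lemma Cap_above (x : R) : Rbar_lt beta x -> Cap x alpha beta = beta.
Proof.
  intros Hx; unfold Cap.
  destruct (Rbar_lt_dec x alpha) as [Hxa | _].
  - exfalso; apply (Rbar_lt_not_le alpha x Hxa), Rbar_lt_le, (Rbar_lt_trans _ beta); assumption.
  - destruct (Rbar_lt_dec beta x); [reflexivity | contradiction].
Qed.

Lemma Cap_inside (x : R) : Rbar_le alpha x -> Rbar_le x beta -> Cap x alpha beta = x.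
Proof.
  intros Hax Hxb; unfold Cap.
  destruct (Rbar_lt_dec x alpha) as [H | _]; [now apply Rbar_lt_not_le in H |].
  destruct (Rbar_lt_dec beta x) as [H | _]; [now apply Rbar_lt_not_le in H |].
  reflexivity.
Qed.

End Cap.

Section Penalty.

Variables (q : R) (alpha beta : Rbar).
Hypotheses (Hq : 0 < q) (Hab : Rbar_lt alpha beta).

Definition clip (c : R) : R := q * real (Cap (c / q) alpha beta).

Definition min_penalty (c : R) : R := 2 * clip c * c - clip c ^ 2.

Definition penalty (c l : R) : Rbar :=
  Rbar_plus (Rbar_mult (2 * q) (deltaK alpha beta l)) ((c + l) ^ 2).

Lemma clip_below (a c : R) : alpha = Finite a -> c < q * a -> clip c = q * a.
Proof.
  intros Ha Hc; unfold clip; rewrite Cap_below, Ha; [reflexivity |].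
  rewrite Ha; simpl; apply Rlt_div_l; lra.
Qed.

Lemma clip_above (b c : R) : beta = Finite b -> q * b < c -> clip c = q * b.
Proof.
  intros Hb Hc; unfold clip; rewrite Cap_above, Hb; [reflexivity | exact Hab |].
  rewrite Hb; simpl; apply Rlt_div_r; lra.
Qed.

Lemma clip_cases (c : R) :
  (exists a, alpha = Finite a /\ c < q * a /\ clip c = q * a) \/
  (exists b, beta = Finite b /\ q * b < c /\ clip c = q * b) \/
  (clip c = c /\ (forall a, alpha = Finite a -> q * a <= c) /\
                 (forall b, beta = Finite b -> c <= q * b)).
Proof.
  destruct (Rbar_lt_dec (c / q) alpha) as [Hlo | Hlo].
  - left; case_eq alpha; [intros a Ea | intros Ea | intros Ea];
      rewrite Ea in Hlo; [| now rewrite Ea in Hab; destruct beta | contradiction].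
    assert (Hc : c < q * a) by (rewrite Rmult_comm; apply Rlt_div_l; assumption).
    exists a; split; [reflexivity |]; split; [exact Hc | exact (clip_below a c Ea Hc)].
  - destruct (Rbar_lt_dec beta (c / q)) as [Hhi | Hhi].
    + right; left; case_eq beta; [intros b Eb | intros Eb | intros Eb];
        rewrite Eb in Hhi; [| contradiction | now rewrite Eb in Hab; destruct alpha].
      assert (Hc : q * b < c) by (rewrite Rmult_comm; apply Rlt_div_r; assumption).
      exists b; split; [reflexivity |]; split; [exact Hc | exact (clip_above b c Eb Hc)].
    + right; right; apply Rbar_not_lt_le in Hlo, Hhi; split; [| split].
      * unfold clip; rewrite Cap_inside by assumption; simpl; field; lra.
      * intros a Ha; rewrite Ha in Hlo; simpl in Hlo.
        rewrite Rmult_comm; apply Rle_div_r; assumption.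
      * intros b Hb; rewrite Hb in Hhi; simpl in Hhi.
        rewrite Rmult_comm; apply Rle_div_l; assumption.
Qed.

Lemma clip_lower_bound (a c : R) : alpha = Finite a -> q * a <= clip c.
Proof.
  intros Ha.
  destruct (clip_cases c) as [[a' [Ha' [_ ->]]] | [[b [Hb [_ ->]]] | [-> [Hlo _]]]].
  - rewrite Ha in Ha'; injection Ha' as <-; lra.
  - rewrite Ha, Hb in Hab; simpl in Hab; nra.
  - exact (Hlo a Ha).
Qed.

Lemma clip_upper_bound (b c : R) : beta = Finite b -> clip c <= q * b.
Proof.
  intros Hb.
  destruct (clip_cases c) as [[a [Ha [_ ->]]] | [[b' [Hb' [_ ->]]] | [-> [_ Hhi]]]].
  - rewrite Ha, Hb in Hab; simpl in Hab; nra.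
  - rewrite Hb in Hb'; injection Hb' as <-; lra.
  - exact (Hhi b Hb).
Qed.

Lemma clip_abs_le (c : R) :
  Rabs (clip c) <= Rabs c + q * (Rabs (real alpha) + Rabs (real beta)).
Proof.
  pose proof (Rabs_pos (real alpha)); pose proof (Rabs_pos (real beta)); pose proof (Rabs_pos c).
  destruct (clip_cases c) as [[a [Ha [_ ->]]] | [[b [Hb [_ ->]]] | [-> _]]].
  - rewrite Ha in *; simpl in *; rewrite Rabs_mult, (Rabs_pos_eq q) by lra; nra.
  - rewrite Hb in *; simpl in *; rewrite Rabs_mult, (Rabs_pos_eq q) by lra; nra.
  - nra.
Qed.

Lemma deltaK_clip (c : R) :
  Rbar_mult (2 * q) (deltaK alpha beta (clip c - c)) = Finite (- 2 * clip c * (clip c - c)).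
Proof.
  unfold deltaK.
  destruct (clip_cases c) as [[a [Ha [Hc ->]]] | [[b [Hb [Hc ->]]] | [-> _]]].
  - destruct (Rlt_dec 0 (q * a - c)); [| lra].
    rewrite Ha; simpl; f_equal; ring.
  - destruct (Rlt_dec 0 (q * b - c)); [lra |]; destruct (Rlt_dec (q * b - c) 0); [| lra].
    rewrite Hb; simpl; f_equal; ring.
  - rewrite Rminus_eq_0.
    destruct (Rlt_dec 0 0); [lra |]; destruct (Rlt_dec 0 0); [lra |].
    simpl; f_equal; ring.
Qed.

Lemma penalty_clip (c : R) : penalty c (clip c - c) = Finite (min_penalty c).
Proof.
  unfold penalty, min_penalty; rewrite deltaK_clip; simpl; f_equal; ring.
Qed.

Lemma min_penalty_le_penalty (c l : R) : Rbar_le (min_penalty c) (penalty c l).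
Proof.
  pose proof (fun a => clip_lower_bound a c) as Hlo.
  pose proof (fun b => clip_upper_bound b c) as Hhi.
  unfold penalty, min_penalty, deltaK; set (p := clip c) in *.
  assert (Hsq : 0 <= (c + l - p) ^ 2) by apply pow2_ge_0.
  destruct (Rlt_dec 0 l) as [Hl | Hl]; [| destruct (Rlt_dec l 0) as [Hl' | Hl']].
  - destruct alpha as [a | |] eqn:Ea; [| now destruct beta |].
    + specialize (Hlo a eq_refl); simpl; nra.
    + rewrite (Rbar_mult_comm m_infty), Rbar_mult_pos_m_infty by lra; simpl Rbar_opp.
      now rewrite Rbar_mult_pos_p_infty by lra.
  - destruct beta as [b | |] eqn:Eb; [| | now destruct alpha].
    + specialize (Hhi b eq_refl); simpl; nra.
    + rewrite Rbar_mult_p_infty_neg by lra; simpl Rbar_opp.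
      now rewrite Rbar_mult_pos_p_infty by lra.
  - replace l with 0 in * by lra; simpl; nra.
Qed.

Lemma min_penalty_sub_le (c d : R) :
  min_penalty d - min_penalty c <= (d - c) * (d - c + 2 * clip c).
Proof.
  pose proof (min_penalty_le_penalty d (clip c - c)) as Hd.
  unfold penalty in Hd; rewrite deltaK_clip in Hd; simpl in Hd.
  unfold min_penalty at 2; lra.
Qed.

Lemma min_penalty_locally_lipschitz : locally_lipschitz min_penalty.
Proof.
  intros M; set (K := Rabs M + q * (Rabs (real alpha) + Rabs (real beta))).
  assert (HclipK : forall x, Rabs x <= M -> Rabs (clip x) <= K).
  { intros x Hx; pose proof (clip_abs_le x); pose proof (Rle_abs M); unfold K; lra. }
  exists (2 * Rabs M + 2 * K); split.
  { pose proof (HclipK 0); pose proof (Rabs_pos (clip 0)); pose proof (Rabs_pos M).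
    assert (0 <= K) by (unfold K; pose proof (Rabs_pos (real alpha));
                        pose proof (Rabs_pos (real beta)); nra).
    lra. }
  intros x y Hx Hy.
  pose proof (min_penalty_sub_le x y) as Hxy; pose proof (min_penalty_sub_le y x) as Hyx.
  pose proof (HclipK x Hx); pose proof (HclipK y Hy).
  assert (Hd : Rabs (y - x) <= 2 * Rabs M).
  { unfold Rminus; eapply Rle_trans; [apply Rabs_triang |].
    rewrite Rabs_Ropp; pose proof (Rle_abs M); lra. }
  assert (Hsq : (y - x) * (y - x) = Rabs (y - x) * Rabs (y - x)).
  { rewrite <- Rabs_mult, Rabs_pos_eq; [reflexivity | apply Rle_0_sqr]. }
  pose proof (Rle_abs ((y - x) * clip x)); pose proof (Rle_abs ((x - y) * clip y)).
  rewrite Rabs_mult in *; rewrite (Rabs_minus_sym x y) in *.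
  pose proof (Rabs_pos (y - x)); pose proof (Rabs_pos (clip x)); pose proof (Rabs_pos (clip y)).
  apply Rabs_le; split; nra.
Qed.

End Penalty.

Section Model.

Variables (eta kappa sigma rho b : R) (alpha beta : Rbar).
Hypotheses (Heta : 0 < eta) (Hsigma : 0 < sigma) (Hb1 : b < 1) (Hb0 : b <> 0)
  (Hab : Rbar_lt alpha beta).

Lemma inf_term_min_penalty (x : R) :
  inf_term eta sigma rho b alpha beta x
  = Finite (min_penalty (1 - b) alpha beta (eta + sigma * rho * x)).
Proof.
  assert (Hq : 0 < 1 - b) by lra.
  set (c := eta + sigma * rho * x).
  assert (Hpen : forall l, Rbar_plus (Rbar_mult (2 * (1 - b)) (deltaK alpha beta l))
                            ((eta + l + sigma * rho * x) ^ 2) = penalty (1 - b) alpha beta c l).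
  { intros l; unfold penalty, c; do 2 f_equal; ring. }
  unfold inf_term; apply Rbar_is_glb_unique; split.
  - intros y [l ->]; rewrite Hpen; apply min_penalty_le_penalty; assumption.
  - intros m Hm; rewrite <- penalty_clip by assumption.
    apply Hm; exists (clip (1 - b) alpha beta c - c); now rewrite Hpen.
Qed.

Lemma F_con_min_penalty (x : R) :
  F_con eta kappa sigma rho b alpha beta x
  = - kappa * x + / 2 * sigma ^ 2 * x ^ 2
    + / 2 * (b / (1 - b)) * min_penalty (1 - b) alpha beta (eta + sigma * rho * x).
Proof. unfold F_con; now rewrite inf_term_min_penalty. Qed.

Lemma F_con_locally_lipschitz : locally_lipschitz (F_con eta kappa sigma rho b alpha beta).
Proof.
  eapply locally_lipschitz_ext; [intros x; symmetry; apply F_con_min_penalty |].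
  apply locally_lipschitz_plus; [locally_lipschitz_poly |].
  apply locally_lipschitz_mult; [apply locally_lipschitz_const |].
  apply (locally_lipschitz_comp (min_penalty (1 - b) alpha beta));
    [apply min_penalty_locally_lipschitz; [lra | exact Hab] | locally_lipschitz_poly].
Qed.

Lemma F_unc_locally_lipschitz : locally_lipschitz (F_unc eta kappa sigma rho b).
Proof. unfold F_unc; locally_lipschitz_poly. Qed.

Lemma F_con_at_0 :
  F_con eta kappa sigma rho b alpha beta 0
  = / 2 * (b / (1 - b)) * min_penalty (1 - b) alpha beta eta.
Proof. rewrite F_con_min_penalty; replace (eta + sigma * rho * 0) with eta by ring; ring. Qed.

Lemma F_con_at_0_eq_0 (a : R) : alpha = Finite a -> (1 - b) * a = 2 * eta ->
  F_con eta kappa sigma rho b alpha beta 0 = 0.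
Proof.
  intros Ha Hqa; rewrite F_con_at_0; unfold min_penalty.
  rewrite (clip_below (1 - b) alpha beta ltac:(lra) a eta Ha) by lra.
  rewrite Hqa; ring.
Qed.

Lemma F_con_at_0_sign (bb : R) : beta = Finite bb -> 0 < bb -> (1 - b) * bb < eta ->
  0 < F_con eta kappa sigma rho b alpha beta 0 * b.
Proof.
  intros Hbb Hbb0 Hqb; rewrite F_con_at_0; unfold min_penalty.
  rewrite (clip_above (1 - b) alpha beta ltac:(lra) Hab bb eta Hbb Hqb).
  assert (Hgain : 0 < 2 * ((1 - b) * bb) * eta - ((1 - b) * bb) ^ 2).
  { assert (0 < (1 - b) * bb) by nra; nra. }
  assert (0 < / (1 - b)) by (apply Rinv_0_lt_compat; lra).
  pose proof (Rsqr_pos_lt b Hb0); unfold Rsqr in *.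
  replace (/ 2 * (b / (1 - b)) * (2 * ((1 - b) * bb) * eta - ((1 - b) * bb) ^ 2) * b)
    with (b * b * (/ 2 * / (1 - b) * (2 * ((1 - b) * bb) * eta - ((1 - b) * bb) ^ 2)))
    by (unfold Rdiv; ring).
  apply Rmult_lt_0_compat; [assumption | repeat apply Rmult_lt_0_compat; lra].
Qed.

Lemma F_unc_at_0_sign : 0 < F_unc eta kappa sigma rho b 0 * b.
Proof.
  replace (F_unc eta kappa sigma rho b 0 * b) with (b * b * (eta ^ 2 * / (2 * (1 - b))))
    by (unfold F_unc, r0; field; lra).
  pose proof (Rsqr_pos_lt b Hb0); unfold Rsqr in *.
  assert (0 < / (2 * (1 - b))) by (apply Rinv_0_lt_compat; lra).
  apply Rmult_lt_0_compat; [assumption | apply Rmult_lt_0_compat; [nra | assumption]].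
Qed.

Lemma lt_Bminus_iff (e : Rbar) (y : R) :
  Rbar_lt y (Bminus eta sigma b e) <-> Rbar_lt (/ (1 - b) * (eta + sigma * y)) e.
Proof.
  assert (Hs : 0 < / sigma) by (apply Rinv_0_lt_compat; lra).
  unfold Bminus; destruct e as [e | |].
  - simpl; rewrite (Rmult_comm (/ sigma)), (Rmult_comm (/ (1 - b))), <- !Rdiv_def.
    rewrite <- Rlt_div_r, Rlt_div_l by lra; lra.
  - rewrite Rbar_mult_pos_p_infty by lra; change (Rbar_minus p_infty eta) with p_infty.
    rewrite Rbar_mult_pos_p_infty by exact Hs; simpl; tauto.
  - rewrite Rbar_mult_pos_m_infty by lra; change (Rbar_minus m_infty eta) with m_infty.
    rewrite Rbar_mult_pos_m_infty by exact Hs; simpl; tauto.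
Qed.

Lemma Bminus_lt_iff (e : Rbar) (y : R) :
  Rbar_lt (Bminus eta sigma b e) y <-> Rbar_lt e (/ (1 - b) * (eta + sigma * y)).
Proof.
  assert (Hs : 0 < / sigma) by (apply Rinv_0_lt_compat; lra).
  unfold Bminus; destruct e as [e | |].
  - simpl; rewrite (Rmult_comm (/ sigma)), (Rmult_comm (/ (1 - b))), <- !Rdiv_def.
    rewrite Rlt_div_l, <- Rlt_div_r by lra; lra.
  - rewrite Rbar_mult_pos_p_infty by lra; change (Rbar_minus p_infty eta) with p_infty.
    rewrite Rbar_mult_pos_p_infty by exact Hs; simpl; tauto.
  - rewrite Rbar_mult_pos_m_infty by lra; change (Rbar_minus m_infty eta) with m_infty.
    rewrite Rbar_mult_pos_m_infty by exact Hs; simpl; tauto.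
Qed.

Lemma pi_star_Cap (T : R) (X : R -> R) (t : R) :
  Finite (pi_star T eta sigma rho b alpha beta X t) = Cap (pi_hat T eta sigma rho b X t) alpha beta.
Proof.
  unfold pi_star, pi_hat, lambda_star.
  replace (sigma * rho * X (T - t)) with (sigma * (rho * X (T - t))) by ring.
  set (y := rho * X (T - t)).
  destruct (Rbar_lt_dec y (Bminus eta sigma b alpha)) as [Hlo | Hlo];
    rewrite lt_Bminus_iff in Hlo.
  - rewrite Cap_below by exact Hlo.
    destruct alpha as [a | |]; [| now destruct beta | now simpl in Hlo].
    simpl; f_equal; field; lra.
  - (* [Bplus] is the map [Bminus] applied to the upper endpoint. *)
    change (Bplus eta sigma b beta) with (Bminus eta sigma b beta).
    destruct (Rbar_lt_dec (Bminus eta sigma b beta) y) as [Hhi | Hhi];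
      rewrite Bminus_lt_iff in Hhi.
    + rewrite Cap_above by assumption.
      destruct beta as [bb | |]; [| now simpl in Hhi | now destruct alpha].
      simpl; f_equal; field; lra.
    + rewrite Cap_inside by (apply Rbar_not_lt_le; assumption).
      f_equal; ring.
Qed.

Lemma sign_Derive_pi_u (T : R) (X : R -> R) (t d : R) :
  is_derive X (T - t) d -> sign d = sign b ->
  sign (Derive (pi_u T eta sigma rho b X) t) = - sign (rho * b).
Proof.
  intros HX Hd.
  assert (HD : Derive (pi_u T eta sigma rho b X) t = - (/ (1 - b) * sigma * rho) * d).
  { apply is_derive_unique; unfold pi_u.
    assert (Hex : ex_derive X (T - t)) by now exists d.
    auto_derive; [exact Hex |].
    replace (Derive (fun x => X x) (T + - t)) with d by (symmetry; now apply is_derive_unique).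
    ring. }
  rewrite HD, !sign_mult, sign_opp, !sign_mult, Hd, (sign_eq_1 sigma), (sign_eq_1 (/ (1 - b)));
    [ring | apply Rinv_0_lt_compat; lra | lra].
Qed.

Lemma Cap_pi_u_above (T : R) (X : R -> R) (t : R) :
  Rbar_lt beta (pi_M eta b) -> 0 <= rho * X (T - t) ->
  Cap (pi_u T eta sigma rho b X t) alpha beta = beta.
Proof.
  intros Hbeta HX; apply Cap_above; [exact Hab |].
  apply (Rbar_lt_le_trans _ (pi_M eta b)); [exact Hbeta | simpl].
  unfold pi_M, pi_u, Rdiv; rewrite (Rmult_comm eta).
  apply Rmult_le_compat_l; [apply Rlt_le, Rinv_0_lt_compat; lra |].
  rewrite Rmult_assoc; pose proof (Rmult_le_pos sigma _ ltac:(lra) HX); lra.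
Qed.

Lemma beta_finite_below_pi_M : Rbar_lt beta (pi_M eta b) -> Rbar_lt 0 beta ->
  exists bb, beta = Finite bb /\ 0 < bb /\ (1 - b) * bb < eta.
Proof.
  intros Hbeta Hbeta0; destruct beta as [bb | |]; [| contradiction | contradiction].
  exists bb; simpl in *; unfold pi_M in Hbeta.
  split; [reflexivity | split; [exact Hbeta0 |]].
  rewrite Rmult_comm; apply Rlt_div_r; lra.
Qed.

Section Solutions.

Variables (T : R) (B Bu : R -> R).
Hypotheses (HT : 0 < T) (HB0 : B 0 = 0) (HBu0 : Bu 0 = 0).
Hypothesis HB : forall tau, 0 <= tau <= T ->
  is_derive B tau (F_con eta kappa sigma rho b alpha beta (B tau)).
Hypothesis HBu : forall tau, 0 <= tau <= T ->
  is_derive Bu tau (F_unc eta kappa sigma rho b (Bu tau)).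

Lemma pi_M_half_alpha :
  0 < pi_M eta b -> Finite (pi_M eta b) = Rbar_mult alpha (/ 2) ->
  (exists tstar, 0 <= tstar <= T /\ Rbar_lt alpha (pi_u T eta sigma rho b Bu tstar) /\
                 Rbar_lt (pi_u T eta sigma rho b Bu tstar) beta) ->
  (forall tau, 0 <= tau <= T -> B tau = 0) /\
  (forall t, 0 <= t <= T -> Finite (pi_star T eta sigma rho b alpha beta B t) = alpha) /\
  ~ (forall t, 0 <= t <= T ->
       Finite (pi_star T eta sigma rho b alpha beta B t)
       = Cap (pi_u T eta sigma rho b Bu t) alpha beta).
Proof.
  intros HpiM Hhalf [tstar [Htstar [Hlo Hhi]]]; symmetry in Hhalf.
  apply Rbar_mult_pos_r_finite in Hhalf; [| lra].
  assert (HBzero : forall tau, 0 <= tau <= T -> B tau = 0).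
  { intros tau Htau; rewrite <- HB0.
    apply (solution_stationary _ B T F_con_locally_lipschitz HB 0); [lra | lra | | exact Htau].
    rewrite HB0; apply (F_con_at_0_eq_0 _ Hhalf); unfold pi_M; field; lra. }
  assert (Hpi : forall t, 0 <= t <= T ->
    Finite (pi_star T eta sigma rho b alpha beta B t) = alpha).
  { intros t Ht; rewrite pi_star_Cap; apply Cap_below.
    unfold pi_hat; rewrite (HBzero (T - t)) by lra; rewrite Hhalf; simpl.
    unfold pi_M in HpiM |- *.
    replace (/ (1 - b) * (eta + sigma * rho * 0)) with (eta / (1 - b)) by (field; lra).
    replace (eta / (1 - b) / / 2) with (2 * (eta / (1 - b))) by (field; lra); lra. }
  split; [exact HBzero | split; [exact Hpi |]].
  intros Hall; specialize (Hall tstar Htstar).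
  rewrite Hpi, Cap_inside in Hall by (assumption || now apply Rbar_lt_le).
  rewrite Hall in Hlo; simpl in Hlo; lra.
Qed.

Lemma F_con_solution_sign (tau : R) :
  Rbar_lt beta (pi_M eta b) -> Rbar_lt 0 beta -> 0 <= tau <= T ->
  0 < F_con eta kappa sigma rho b alpha beta (B tau) * b.
Proof.
  intros Hbeta Hbeta0 Htau.
  destruct (beta_finite_below_pi_M Hbeta Hbeta0) as [bb [Hbb [Hbb0 Hqb]]].
  apply (solution_rhs_sign _ B T F_con_locally_lipschitz HB); [lra | | exact Htau].
  rewrite HB0; exact (F_con_at_0_sign bb Hbb Hbb0 Hqb).
Qed.

Lemma F_unc_solution_sign (tau : R) : 0 <= tau <= T -> 0 < F_unc eta kappa sigma rho b (Bu tau) * b.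
Proof.
  intros Htau; apply (solution_rhs_sign _ Bu T F_unc_locally_lipschitz HBu); [lra | | exact Htau].
  rewrite HBu0; exact F_unc_at_0_sign.
Qed.

Lemma pi_M_above_beta_Derive_sign : Rbar_lt beta (pi_M eta b) -> Rbar_lt 0 beta ->
  forall t, 0 <= t <= T ->
    sign (Derive (pi_hat T eta sigma rho b B) t) = - sign (rho * b) /\
    sign (Derive (pi_u T eta sigma rho b Bu) t) = - sign (rho * b).
Proof.
  intros Hbeta Hbeta0 t Ht; split.
  - apply (sign_Derive_pi_u T B t _ (HB (T - t) ltac:(lra))).
    apply sign_eq_of_mult_pos, F_con_solution_sign; [assumption | assumption | lra].
  - apply (sign_Derive_pi_u T Bu t _ (HBu (T - t) ltac:(lra))).
    apply sign_eq_of_mult_pos, F_unc_solution_sign; lra.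
Qed.

Lemma pi_M_above_beta_Cap : Rbar_lt beta (pi_M eta b) -> Rbar_lt 0 beta -> b < 0 -> rho < 0 ->
  forall t, 0 <= t <= T ->
    Finite (pi_star T eta sigma rho b alpha beta B t)
    = Cap (pi_u T eta sigma rho b Bu t) alpha beta.
Proof.
  intros Hbeta Hbeta0 Hbn Hrn t Ht.
  assert (HBnonpos : B (T - t) <= 0).
  { rewrite <- HB0; apply (solution_le_start _ B T F_con_locally_lipschitz HB); [lra | | lra].
    pose proof (F_con_solution_sign 0 Hbeta Hbeta0 ltac:(lra)); nra. }
  assert (HBunonpos : Bu (T - t) <= 0).
  { rewrite <- HBu0; apply (solution_le_start _ Bu T F_unc_locally_lipschitz HBu); [lra | | lra].
    pose proof (F_unc_solution_sign 0 ltac:(lra)); nra. }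
  rewrite pi_star_Cap; unfold pi_hat; fold (pi_u T eta sigma rho b B t).
  rewrite !Cap_pi_u_above; [reflexivity | assumption | nra | assumption | nra].
Qed.

End Solutions.

End Model.

Theorem corollary2p11
  (T eta kappa sigma rho b : R) (alpha beta : Rbar) (B Bu : R -> R)
  (HT : 0 < T) (Heta : 0 < eta) (Hkappa : 0 < kappa) (Hsigma : 0 < sigma)
  (Hrho : -1 < rho < 1) (Hb1 : b < 1) (Hb0 : b <> 0)
  (Hab : Rbar_lt alpha beta)
  (HB0 : B 0 = 0)
  (HB : forall tau, 0 <= tau <= T ->
          is_derive B tau (F_con eta kappa sigma rho b alpha beta (B tau)))
  (HBu0 : Bu 0 = 0)
  (HBu : forall tau, 0 <= tau <= T ->
          is_derive Bu tau (F_unc eta kappa sigma rho b (Bu tau))) :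
  (* (i) *)
  ((0 < pi_M eta b /\
    Finite (pi_M eta b) = Rbar_mult alpha (Finite (/ 2)) /\
    Rbar_lt (Finite (pi_M eta b)) alpha /\
    (exists tstar, 0 <= tstar <= T /\
       Rbar_lt alpha (Finite (pi_u T eta sigma rho b Bu tstar)) /\
       Rbar_lt (Finite (pi_u T eta sigma rho b Bu tstar)) beta)) ->
   (forall tau, 0 <= tau <= T -> B tau = 0) /\
   (forall t, 0 <= t <= T -> Finite (pi_star T eta sigma rho b alpha beta B t) = alpha) /\
   ~ (forall t, 0 <= t <= T ->
        Finite (pi_star T eta sigma rho b alpha beta B t)
        = Cap (pi_u T eta sigma rho b Bu t) alpha beta))
  /\
  (* (ii) *)
  ((Rbar_lt beta (Finite (pi_M eta b)) /\ Rbar_lt (Finite 0) beta) ->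
   (forall t, 0 <= t <= T ->
      sign (Derive (pi_hat T eta sigma rho b B) t) = - sign (rho * b) /\
      sign (Derive (pi_u T eta sigma rho b Bu) t) = - sign (rho * b)) /\
   (b < 0 -> rho < 0 ->
      forall t, 0 <= t <= T ->
        Finite (pi_star T eta sigma rho b alpha beta B t)
        = Cap (pi_u T eta sigma rho b Bu t) alpha beta)).
Proof.
  split.
  - intros [HpiM [Hhalf [_ Htstar]]].
    eapply (pi_M_half_alpha eta kappa sigma rho b alpha beta); eassumption.
  - intros [Hbeta Hbeta0]; split.
    + eapply (pi_M_above_beta_Derive_sign eta kappa sigma rho b alpha beta); eassumption.
    + eapply (pi_M_above_beta_Cap eta kappa sigma rho b alpha beta); eassumption.
Qed.
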